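(* Let $\theta>0$, $\lambda>0$, $\mu>0$ with $\lambda<\mu+1$. For $\alpha\ge 0$, $d\ge 0$ let $$\pi(\alpha,d)=(\theta+\mu)\alpha-\frac{\alpha^2}{2}-\frac{\alpha}{\alpha+d}\,\lambda\alpha\theta-d .$$ For $\alpha>0$ let $\Pi(\alpha;\theta)=\max_{d\ge 0}\pi(\alpha,d)$, and let $\alpha^*(\theta)$ denote the maximizer of $\Pi(\alpha;\theta)$ over $\alpha>0$, which equals $$\alpha^*(\theta)=\begin{cases}\mu+\theta(1-\lambda), & \lambda\theta\le 1,\\ \theta+\mu+1-2\sqrt{\lambda\theta}, & \lambda\theta>1.\end{cases}$$ Then $$\frac{\partial\alpha^*}{\partial\theta}=\begin{cases}1-\lambda, & \lambda\theta\le 1,\\ 1-\sqrt{\lambda/\theta}, & \lambda\theta>1.\end{cases}$$ If $\lambda>1$: (i) $\alpha^*$ is strictly decreasing in $\theta$ on $(0,\lambda)$; (ii) $\alpha^*$ is strictly increasing in $\theta$ on $(\lambda,\infty)$; (iii) the global minimum of $\alpha^*$ over $\theta>0$ equals $\mu+1-\lambda$ and is attained at $\theta=\lambda$. If $\lambda\le 1$: $\partial\alpha^*/\partial\theta\ge 0$ for all $\theta>0$.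
   Context: Model of a firm choosing AI deployment $\alpha\ge 0$ and security investment $d\ge 0$. $\theta$ is AI capability, $\lambda$ conditional breach-loss magnitude, $\mu$ complementary organizational readiness. Breach probability is $p(\alpha,d)=\alpha/(\alpha+d)$ (with convention $p(0,d)=0$), breach damage is $L(\alpha,\theta)=\lambda\alpha\theta$, and profit is productivity $(\theta+\mu)\alpha-\alpha^2/2$ minus expected loss $p\cdot L$ minus $d$. *)

From Stdlib Require Import Reals Lra.
From Coquelicot Require Import Coquelicot.
Open Scope R_scope.

Definition breach_prob (a d : R) : R :=
  if Req_EM_T a 0 then 0 else a / (a + d).

Definition profit (theta lam mu a d : R) : R :=
  (theta + mu) * a - a ^ 2 / 2 - breach_prob a d * (lam * a * theta) - d.

Definition is_max_on (S : R -> Prop) (f : R -> R) (v : R) : Prop :=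
  (exists x, S x /\ f x = v) /\ (forall x, S x -> f x <= v).

Definition is_Pi (theta lam mu a v : R) : Prop :=
  is_max_on (fun d => 0 <= d) (profit theta lam mu a) v.

Definition is_unique_argmax_Pi (theta lam mu a : R) : Prop :=
  0 < a /\
  exists v, is_Pi theta lam mu a v /\
    (forall b w, 0 < b -> is_Pi theta lam mu b w -> w <= v) /\
    (forall b w, 0 < b -> b <> a -> is_Pi theta lam mu b w -> w < v).

Definition alpha_star (lam mu theta : R) : R :=
  if Rle_dec (lam * theta) 1 then mu + theta * (1 - lam)
  else theta + mu + 1 - 2 * sqrt (lam * theta).

Definition alpha_star_deriv (lam theta : R) : R :=
  if Rle_dec (lam * theta) 1 then 1 - lam else 1 - sqrt (lam / theta).

From Stdlib Require Import Reals Lra Psatz.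
From Coquelicot Require Import Coquelicot.
Open Scope R_scope.

(* Write c = λθ.  The expected loss plus security spending a/(a+d) c a + d is
   minimised over d >= 0 at d = 0 if c <= 1 and at d = a(√c - 1) otherwise, with
   minimum a κ(c), where κ(c) = c resp. 2√c - 1.  Hence Π(a;θ) = a α* - a²/2 with
   α* = θ + μ - κ(λθ): a parabola in a, uniquely maximised at a = α*, which is
   positive since α* >= min(μ, μ + 1 - λ).  The two branches of α* meet with the
   same slope 1 - λ at λθ = 1, and for λ > 1 the derivative has the sign of θ - λ;
   monotonicity then follows from the mean value theorem, and the minimum from
   the high branch being (√θ - √λ)² + μ + 1 - λ. *)

Definition min_unit_cost (c : R) : R :=
  if Rle_dec c 1 then c else 2 * sqrt c - 1.

Lemma alpha_star_min_unit_cost lam mu theta :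
  alpha_star lam mu theta = theta + mu - min_unit_cost (lam * theta).
Proof. unfold alpha_star, min_unit_cost; destruct Rle_dec; ring. Qed.

Lemma min_unit_cost_le a c d : 0 < a -> 0 <= d ->
  a * min_unit_cost c <= a / (a + d) * (c * a) + d.
Proof.
  intros ha hd; unfold min_unit_cost; destruct Rle_dec as [hc | hc].
  - assert (E : a / (a + d) * (c * a) + d - a * c = d * (a * (1 - c) + d) / (a + d))
      by (field; lra).
    assert (0 <= d * (a * (1 - c) + d) / (a + d)); [|lra].
    apply Rdiv_le_0_compat; [apply Rmult_le_pos; nra | lra].
  - set (r := sqrt c).
    assert (Hc : c = r * r) by (symmetry; apply sqrt_sqrt; lra).
    rewrite Hc.
    assert (E : a / (a + d) * (r * r * a) + d - a * (2 * r - 1)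
                = (r * a - (a + d)) ^ 2 / (a + d)) by (field; lra).
    assert (0 <= (r * a - (a + d)) ^ 2 / (a + d)); [|lra].
    apply Rdiv_le_0_compat; [apply pow2_ge_0 | lra].
Qed.

Lemma min_unit_cost_attained a c : 0 < a ->
  exists d, 0 <= d /\ a / (a + d) * (c * a) + d = a * min_unit_cost c.
Proof.
  intros ha; unfold min_unit_cost; destruct Rle_dec as [hc | hc].
  - exists 0; split; [lra | field; lra].
  - set (r := sqrt c).
    assert (Hc : c = r * r) by (symmetry; apply sqrt_sqrt; lra).
    assert (Hr : 1 < r).
    { unfold r; rewrite <- sqrt_1; apply sqrt_lt_1; lra. }
    exists (a * (r - 1)); split; [nra|].
    rewrite Hc; field; nra.
Qed.

Lemma profit_pos_deployment a theta lam mu d : 0 < a ->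
  profit theta lam mu a d
  = (theta + mu) * a - a ^ 2 / 2 - (a / (a + d) * ((lam * theta) * a) + d).
Proof.
  intros ha; unfold profit, breach_prob.
  destruct Req_EM_T; [lra | ring].
Qed.

Lemma is_Pi_alpha_star theta lam mu a : 0 < a ->
  is_Pi theta lam mu a (a * alpha_star lam mu theta - a ^ 2 / 2).
Proof.
  intros ha; rewrite alpha_star_min_unit_cost; split.
  - destruct (min_unit_cost_attained a (lam * theta) ha) as [d [hd Ed]].
    exists d; split; [exact hd|].
    rewrite profit_pos_deployment, Ed by exact ha; ring.
  - intros d hd; rewrite profit_pos_deployment by exact ha.
    assert (H := min_unit_cost_le a (lam * theta) d ha hd); nra.
Qed.

Lemma is_max_on_unique S f v w : is_max_on S f v -> is_max_on S f w -> v = w.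
Proof.
  intros [[x [Sx <-]] Hv] [[y [Sy <-]] Hw].
  apply Rle_antisym; [apply Hw | apply Hv]; assumption.
Qed.

Lemma is_unique_argmax_Pi_alpha_star theta lam mu :
  0 < alpha_star lam mu theta ->
  is_unique_argmax_Pi theta lam mu (alpha_star lam mu theta).
Proof.
  set (A := alpha_star lam mu theta); intros hA.
  assert (Pi_b : forall b w, 0 < b -> is_Pi theta lam mu b w ->
                   w = A ^ 2 / 2 - (b - A) ^ 2 / 2).
  { intros b w hb Hw.
    rewrite <- (is_max_on_unique _ _ _ _ (is_Pi_alpha_star theta lam mu b hb) Hw).
    fold A; lra. }
  split; [exact hA|]; exists (A ^ 2 / 2); split; [|split].
  - replace (A ^ 2 / 2) with (A * A - A ^ 2 / 2) by lra.
    apply is_Pi_alpha_star, hA.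
  - intros b w hb Hw; rewrite (Pi_b b w hb Hw).
    assert (0 <= (b - A) ^ 2) by apply pow2_ge_0; lra.
  - intros b w hb hbA Hw; rewrite (Pi_b b w hb Hw).
    assert (0 < (b - A) ^ 2) by (apply pow2_gt_0; lra); lra.
Qed.

Definition alpha_star_low (lam mu t : R) : R := mu + t * (1 - lam).
Definition alpha_star_high (lam mu t : R) : R := t + mu + 1 - 2 * sqrt (lam * t).

Lemma alpha_star_low_eq lam mu t : lam * t <= 1 ->
  alpha_star lam mu t = alpha_star_low lam mu t.
Proof. intros h; unfold alpha_star; destruct Rle_dec; [reflexivity | lra]. Qed.

Lemma alpha_star_high_eq lam mu t : 1 < lam * t ->
  alpha_star lam mu t = alpha_star_high lam mu t.
Proof. intros h; unfold alpha_star; destruct Rle_dec; [lra | reflexivity]. Qed.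

Lemma alpha_star_high_sq lam mu t : 0 < lam -> 0 < t ->
  alpha_star_high lam mu t = (sqrt t - sqrt lam) ^ 2 + mu + 1 - lam.
Proof.
  intros hl ht; unfold alpha_star_high; rewrite sqrt_mult_alt by lra.
  assert (Ht := sqrt_sqrt t ltac:(lra)); assert (Hl := sqrt_sqrt lam ltac:(lra)).
  nra.
Qed.

Lemma is_derive_alpha_star_low lam mu t :
  is_derive (alpha_star_low lam mu) t (1 - lam).
Proof. unfold alpha_star_low; auto_derive; [exact I | ring]. Qed.

Lemma is_derive_alpha_star_high lam mu t : 0 < lam -> 0 < t ->
  is_derive (alpha_star_high lam mu) t (1 - sqrt (lam / t)).
Proof.
  intros hl ht; unfold alpha_star_high; auto_derive; [nra|].
  rewrite sqrt_mult_alt, sqrt_div_alt by lra.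
  assert (Ht := sqrt_lt_R0 t ht); assert (Hl := sqrt_lt_R0 lam hl).
  assert (Hl2 := sqrt_sqrt lam ltac:(lra)).
  field_simplify_eq; [nra | lra].
Qed.

Lemma is_derive_glue (f g h : R -> R) x l :
  (forall y, f y = g y \/ f y = h y) -> f x = g x -> f x = h x ->
  is_derive g x l -> is_derive h x l -> is_derive f x l.
Proof.
  rewrite !is_derive_Reals; intros Hfgh Hg Hh Dg Dh eps Heps.
  destruct (Dg eps Heps) as [dg Pg]; destruct (Dh eps Heps) as [dh Ph].
  exists (mkposreal _ (Rmin_pos _ _ (cond_pos dg) (cond_pos dh))); simpl.
  intros y hy0 hy.
  assert (Hmg := Rmin_l dg dh); assert (Hmh := Rmin_r dg dh).
  destruct (Hfgh (x + y)) as [-> | ->].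
  - rewrite Hg; apply Pg; [exact hy0 | lra].
  - rewrite Hh; apply Ph; [exact hy0 | lra].
Qed.

Lemma is_derive_alpha_star lam mu theta : 0 < lam -> 0 < theta ->
  is_derive (alpha_star lam mu) theta (alpha_star_deriv lam theta).
Proof.
  intros hl ht; unfold alpha_star_deriv.
  destruct (Rle_dec (lam * theta) 1) as [Hle | Hgt].
  - destruct (Rle_lt_or_eq_dec _ _ Hle) as [Hlt | Heq].
    + apply (is_derive_ext_loc (alpha_star_low lam mu)); [|apply is_derive_alpha_star_low].
      apply (filter_imp (fun t => t < / lam)).
      * intros t Ht; symmetry; apply alpha_star_low_eq.
        apply (Rmult_lt_compat_l lam) in Ht; [|lra].
        rewrite Rinv_r in Ht; lra.
      * apply open_lt; apply (Rmult_lt_reg_l lam); [lra|]; rewrite Rinv_r; lra.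
    + assert (Hsq : sqrt (lam / theta) = lam).
      { replace (lam / theta) with (lam * lam) by (field_simplify_eq; nra).
        apply sqrt_square; lra. }
      apply (is_derive_glue _ (alpha_star_low lam mu) (alpha_star_high lam mu)).
      * intros y; unfold alpha_star; destruct Rle_dec; auto.
      * apply alpha_star_low_eq; exact Hle.
      * unfold alpha_star, alpha_star_high; destruct Rle_dec; [|lra].
        rewrite Heq, sqrt_1; unfold alpha_star_low; nra.
      * apply is_derive_alpha_star_low.
      * replace (1 - lam) with (1 - sqrt (lam / theta)) by (rewrite Hsq; reflexivity).
        apply is_derive_alpha_star_high; assumption.
  - apply (is_derive_ext_loc (alpha_star_high lam mu));
      [|apply is_derive_alpha_star_high; assumption].
    apply (filter_imp (fun t => / lam < t)).
    + intros t Ht; symmetry; apply alpha_star_high_eq.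
      apply (Rmult_lt_compat_l lam) in Ht; [|lra].
      rewrite Rinv_r in Ht; lra.
    + apply open_gt; apply (Rmult_lt_reg_l lam); [lra|]; rewrite Rinv_r; lra.
Qed.

Lemma alpha_star_deriv_pos lam theta : 0 < lam -> lam < theta ->
  0 < alpha_star_deriv lam theta.
Proof.
  intros hl hlt; unfold alpha_star_deriv; destruct Rle_dec as [hle | hgt]; [nra|].
  assert (sqrt (lam / theta) < 1); [|lra].
  rewrite <- sqrt_1; apply sqrt_lt_1_alt; split.
  - apply Rlt_le, Rdiv_lt_0_compat; lra.
  - apply (Rmult_lt_reg_r theta); [lra|]; field_simplify; lra.
Qed.

Lemma alpha_star_deriv_neg lam theta : 1 < lam -> 0 < theta -> theta < lam ->
  alpha_star_deriv lam theta < 0.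
Proof.
  intros hl ht hlt; unfold alpha_star_deriv; destruct Rle_dec as [hle | hgt]; [lra|].
  assert (1 < sqrt (lam / theta)); [|lra].
  rewrite <- sqrt_1; apply sqrt_lt_1_alt; split; [lra|].
  apply (Rmult_lt_reg_r theta); [lra|]; field_simplify; lra.
Qed.

Lemma alpha_star_deriv_nonneg lam theta : 0 < lam -> lam <= 1 -> 0 < theta ->
  0 <= alpha_star_deriv lam theta.
Proof.
  intros hl hl1 ht; destruct (Rlt_or_le lam theta) as [hlt | hge].
  - apply Rlt_le, alpha_star_deriv_pos; assumption.
  - unfold alpha_star_deriv; destruct Rle_dec; nra.
Qed.

Lemma alpha_star_ge lam mu theta : 0 < lam -> 0 < theta ->
  Rmin mu (mu + 1 - lam) <= alpha_star lam mu theta.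
Proof.
  intros hl ht.
  assert (Hm1 := Rmin_l mu (mu + 1 - lam)); assert (Hm2 := Rmin_r mu (mu + 1 - lam)).
  destruct (Rle_dec (lam * theta) 1) as [hle | hgt].
  - rewrite alpha_star_low_eq by exact hle; unfold alpha_star_low.
    destruct (Rle_dec lam 1); nra.
  - rewrite alpha_star_high_eq, alpha_star_high_sq by lra.
    assert (0 <= (sqrt theta - sqrt lam) ^ 2) by apply pow2_ge_0; lra.
Qed.

Lemma alpha_star_at_lam lam mu : 1 < lam -> alpha_star lam mu lam = mu + 1 - lam.
Proof.
  intros hl; rewrite alpha_star_high_eq by nra; unfold alpha_star_high.
  rewrite sqrt_square by lra; ring.
Qed.

Lemma alpha_star_increasing lam mu t1 t2 : 0 < lam -> lam < t1 -> t1 < t2 ->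
  alpha_star lam mu t1 < alpha_star lam mu t2.
Proof.
  intros hl h1 h12.
  apply (incr_function _ lam p_infty (alpha_star_deriv lam)); simpl; try easy.
  - intros t ht _; apply is_derive_alpha_star; lra.
  - intros t ht _; apply alpha_star_deriv_pos; assumption.
Qed.

Lemma alpha_star_decreasing lam mu t1 t2 : 1 < lam -> 0 < t1 -> t1 < t2 -> t2 < lam ->
  alpha_star lam mu t2 < alpha_star lam mu t1.
Proof.
  intros hl h1 h12 h2; apply Ropp_lt_cancel.
  apply (incr_function (fun t => - alpha_star lam mu t) 0 lam
           (fun t => - alpha_star_deriv lam t)); simpl; try assumption.
  - intros t ht _; apply (is_derive_opp (alpha_star lam mu)), is_derive_alpha_star; lra.
  - intros t ht htl; assert (H := alpha_star_deriv_neg lam t hl ht htl); lra.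
Qed.

Theorem proposition3 (lam mu : R) (hlam : 0 < lam) (hmu : 0 < mu)
    (hlm : lam < mu + 1) :
  (* alpha^*(theta) given by the closed form is the maximizer of Pi(.;theta) *)
  (forall theta, 0 < theta -> is_unique_argmax_Pi theta lam mu (alpha_star lam mu theta)) /\
  (* derivative formula *)
  (forall theta, 0 < theta ->
     is_derive (alpha_star lam mu) theta (alpha_star_deriv lam theta)) /\
  (* case lambda > 1 *)
  (1 < lam ->
     (forall t1 t2, 0 < t1 -> t1 < t2 -> t2 < lam ->
        alpha_star lam mu t2 < alpha_star lam mu t1) /\
     (forall t1 t2, lam < t1 -> t1 < t2 ->
        alpha_star lam mu t1 < alpha_star lam mu t2) /\
     (forall theta, 0 < theta -> mu + 1 - lam <= alpha_star lam mu theta) /\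
     alpha_star lam mu lam = mu + 1 - lam) /\
  (* case lambda <= 1 *)
  (lam <= 1 -> forall theta, 0 < theta ->
     forall l, is_derive (alpha_star lam mu) theta l -> 0 <= l).
Proof.
  split; [|split; [|split]].
  - intros theta ht; apply is_unique_argmax_Pi_alpha_star.
    eapply Rlt_le_trans; [|apply alpha_star_ge; assumption].
    apply Rmin_glb_lt; lra.
  - intros theta ht; apply is_derive_alpha_star; assumption.
  - intros hl1; split; [|split; [|split]].
    + intros t1 t2; apply alpha_star_decreasing, hl1.
    + intros t1 t2; apply alpha_star_increasing, hlam.
    + intros theta ht; rewrite <- (Rmin_right mu (mu + 1 - lam)) by lra.
      apply alpha_star_ge; assumption.
    + apply alpha_star_at_lam, hl1.
  - intros hl1 theta ht l Hd.
    rewrite <- (is_derive_unique _ _ _ Hd).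
    rewrite (is_derive_unique _ _ _ (is_derive_alpha_star lam mu theta hlam ht)).
    apply alpha_star_deriv_nonneg; assumption.
Qed.
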